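(* Let $k,\ell,n$ be integers with $2\le\ell<k/2$, $n\ge1$, and let $G_1$, $U_i$, $H_1=H_1^1\cup H_1^2$, $H_2$, $tr_1$ and $\min$ be as in the context. Let $s\ge1$ and let $P=(e,e_1,\dots,e_s,e')$ be an $(\ell,k)$-path (edges listed in order) with $e,e'\in H_1$ and $e_1,\dots,e_s\in H_2$. Then (i) $\min(e_1)=\dots=\min(e_s)\in tr_1(e)\cap tr_1(e')$; (ii) at most one of $e,e'$ belongs to $H_1^2$.
   Context: Let $G_1$ be a graph on vertex set $[n]=\{1,\dots,n\}$. Let $\{A_i,B_i: i=1,\dots,2n\}$ be $4n$ pairwise disjoint finite sets with $|A_i|=2\lfloor k/2\rfloor+\ell$ for $1\le i\le n$ and $|A_i|=2k-2\ell-3$ for $n+1\le i\le 2n$; put $U_i=A_i\cup B_i$ and $V=\bigcup_{i=1}^{2n}U_i$. For $S\subseteq V$ let $tr(S)=\{i:S\cap U_i\ne\emptyset\}$, $tr_1(S)=tr(S)\cap[n]$, $\min(S)=\min tr(S)$. Define $H_1^1$ as the set of $k$-subsets $e\subseteq V$ such that for some edge $\{i,j\}$ of $G_1$, $tr_1(e)=\{i,j\}$, $|A_i\cap e|\ge\lfloor k/2\rfloor$ and $|A_j\cap e|\ge\lfloor k/2\rfloor$. Define $H_1^2$ as the set of $k$-subsets $e\subseteq V$ such that for some $i\in[n]$, $tr(e)=\{i,n+i\}$, $|A_i\cap e|=\ell+1$ and $|A_{n+i}\cap e|=k-\ell-1$. Let $H_1=H_1^1\cup H_1^2$, and let $H_2$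 be the set of $k$-subsets $e\subseteq V$ with $|e\cap U_{\min(e)}|\ge k-\ell+1$. An $(\ell,k)$-path is a $k$-graph with distinct vertices $v_1,\dots,v_s$, $s\equiv\ell\pmod{k-\ell}$, $s\ge k$, and edges $\{v_{i(k-\ell)+1},\dots,v_{i(k-\ell)+k}\}$, $i=0,\dots,(s-k)/(k-\ell)$. *)

From mathcomp Require Import all_boot.
Set Implicit Arguments. Unset Strict Implicit. Unset Printing Implicit Defensive.

(* Model of the ground set V = U_1 u ... u U_{2n}, U_i = A_i u B_i (disjoint):
   V is a finite type T; [part v] is the (1-based) index i with v \in U_i, and
   [inA v] says whether v lies in A_{part v} (otherwise v lies in B_{part v}). *)
Section Defs.
Variables (T : finType) (part : T -> nat) (inA : pred T).

Definition U (i : nat) : {set T} := [set v | part v == i].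
Definition A (i : nat) : {set T} := [set v | (part v == i) && inA v].

Definition tr (S : {set T}) : pred nat := fun i => [exists v in S, part v == i].
Definition tr1 (n : nat) (S : {set T}) : pred nat :=
  fun i => (1 <= i <= n) && tr S i.
(* min(S) = min tr(S) (meaningful for nonempty S; the fold seed is the
   maximum of the part indices, hence does not affect the minimum). *)
Definition mintr (S : {set T}) : nat :=
  \big[minn / (\big[maxn/0]_(v in S) part v)]_(v in S) part v.

Definition H11 (k n : nat) (G1 : rel nat) (e : {set T}) : Prop :=
  #|e| = k /\
  exists i j, G1 i j /\ (forall m, tr1 n e m = (m == i) || (m == j)) /\
              k %/ 2 <= #|A i :&: e| /\ k %/ 2 <= #|A j :&: e|.

Definition H12 (k l n : nat) (e : {set T}) : Prop :=
  #|e| = k /\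
  exists i, 1 <= i <= n /\ (forall m, tr e m = (m == i) || (m == n + i)) /\
            #|A i :&: e| = l.+1 /\ #|A (n + i) :&: e| = k - l - 1.

Definition H1 (k l n : nat) (G1 : rel nat) (e : {set T}) : Prop :=
  H11 k n G1 e \/ H12 k l n e.

Definition H2 (k l : nat) (e : {set T}) : Prop :=
  #|e| = k /\ k - l + 1 <= #|e :&: U (mintr e)|.

End Defs.

(* The i-th edge (0-based) of the (l,k)-path with vertex sequence vs:
   { v_{i(k-l)+1}, ..., v_{i(k-l)+k} }. *)
Definition path_edge (T : finType) (k l : nat) (vs : seq T) (i : nat) : {set T} :=
  [set x in take k (drop (i * (k - l)) vs)].

(* Consecutive edges of an (l,k)-path share at least l >= 2 vertices, while an edge of H_2 has at most
   l - 1 vertices outside U_(min e).  Hence every overlap with an H_2 edge contains a vertex of part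
   min(e_j), so all the middle edges have the same minimum a, and a lies in tr(e) and tr(e').  An edge
   of H_1^1 has at most one vertex of part > n, so it cannot meet e_1 (or e_s) in >= 2 vertices of part
   >= a > n.  Finally two disjoint edges of H_1^2 sharing a trace index i use together
   2(k-l-1) > |A_(n+i)| vertices of A_(n+i), which is impossible; this gives both a <= n and (ii). *)
From HB Require Import structures.
From mathcomp Require Import all_boot zify.
Set Implicit Arguments. Unset Strict Implicit. Unset Printing Implicit Defensive.

HB.instance Definition _ := SemiGroup.isComLaw.Build nat minn minnA minnC.

Lemma leq_card_setI_disjoint (T : finType) (X e f : {set T}) :
  [disjoint e & f] -> #|X :&: e| + #|X :&: f| <= #|X|.
Proof.
move=> def; have /leqifP := leq_card_setU (X :&: e) (X :&: f).
have -> : [disjoint X :&: e & X :&: f].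
  by rewrite (disjointWl (subsetIr X e)) // (disjointWr (subsetIr X f)).
move=> /eqP <-; apply: subset_leq_card; by rewrite subUset !subsetIl.
Qed.

Section PathEdges.
Variables (T : finType) (k l : nat) (vs : seq T).
Hypothesis vs_uniq : uniq vs.

Local Notation edge := (path_edge k l vs).

Lemma path_edge_overlap j :
  l <= k -> j.+1 * (k - l) + l <= size vs -> l <= #|edge j :&: edge j.+1|.
Proof.
move=> lk hsize; set w := take l (drop (j.+1 * (k - l)) vs).
have card_w : #|[set x in w]| = l.
  rewrite cardsE (card_uniqP _) ?take_uniq ?drop_uniq //.
  by rewrite size_takel // size_drop; lia.
rewrite -{1}card_w; apply: subset_leq_card; apply/subsetP => x.
rewrite /path_edge !inE => xw; apply/andP; split.
- move: xw; rewrite /w mulSn -drop_drop take_drop => /mem_drop.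
  by rewrite subnKC.
- by move: xw; rewrite /w -(take_takel _ lk) => /mem_take.
Qed.

Lemma path_edge0_disjoint j : k <= j * (k - l) -> [disjoint edge 0 & edge j].
Proof.
move=> kD; apply/pred0P => x /=; rewrite /path_edge !inE mul0n drop0.
apply/negbTE/andP => -[x1 x2].
move: vs_uniq; rewrite -(cat_take_drop (j * (k - l)) vs) cat_uniq.
case/and3P=> _ /hasP not_shared _; apply: not_shared; exists x; first exact: mem_take x2.
by move: x1; rewrite -(take_takel _ kD) => /mem_take.
Qed.

End PathEdges.

Section Edges.
Variables (T : finType) (part : T -> nat) (inA : pred T) (k l n : nat).

Local Notation mintr := (mintr part).
Local Notation A := (A part inA).

Lemma mintr_le (S : {set T}) v : v \in S -> mintr S <= part v.
Proof. by move=> vS; rewrite /mintr (bigD1 v) //= geq_minl. Qed.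

Lemma mem_tr (S : {set T}) v : v \in S -> tr part S (part v).
Proof. by move=> vS; apply/existsP; exists v; rewrite vS eqxx. Qed.

Lemma H2_overlap_mintr (e f : {set T}) :
  l < k -> H2 part k l e -> l <= #|e :&: f| ->
  exists2 v, v \in e :&: f & part v = mintr e.
Proof.
move=> lk [ek hU] hf; set a := mintr e in hU *.
have /leqifP := leq_card_setU (e :&: f) (e :&: U part a).
have le_e : #|(e :&: f) :|: (e :&: U part a)| <= #|e|.
  by apply: subset_leq_card; rewrite subUset !subsetIl.
case: ifP => [_ /eqP|/negbT]; first lia.
case/pred0Pn => v /andP[]; rewrite !inE => /andP[ve vf] /andP[_ /eqP pv].
by exists v; rewrite ?inE ?ve.
Qed.

Lemma H2_overlap_mintr_eq (e f : {set T}) :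
  l < k -> H2 part k l e -> H2 part k l f -> l <= #|e :&: f| ->
  mintr e = mintr f.
Proof.
move=> lk He Hf ef.
have [v /setIP[_ vf] pv] := H2_overlap_mintr lk He ef.
rewrite setIC in ef; have [w /setIP[_ we] pw] := H2_overlap_mintr lk Hf ef.
by apply/eqP; rewrite eqn_leq -{1}pw -{2}pv !mintr_le.
Qed.

Lemma H2_chain_mintr (E : nat -> {set T}) s :
  l < k -> (forall j, 1 <= j <= s -> H2 part k l (E j)) ->
  (forall j, 1 <= j < s -> l <= #|E j :&: E j.+1|) ->
  forall j, 1 <= j <= s -> mintr (E j) = mintr (E 1).
Proof.
move=> lk HE ovE; elim=> // -[//|j] IH hj; rewrite -IH; last lia.
by apply/esym/(H2_overlap_mintr_eq lk); [apply: HE | apply: HE | apply: ovE]; lia.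
Qed.

Lemma H11_card_part_gt (G1 : rel nat) (e : {set T}) :
  irreflexive G1 -> (forall i j, G1 i j -> (1 <= i <= n) && (1 <= j <= n)) ->
  H11 part inA k n G1 e -> #|[set v in e | n < part v]| <= 1.
Proof.
move=> irrG domG [ek [i [j [Gij [_ [hi hj]]]]]].
have /andP[/andP[_ le_in] /andP[_ le_jn]] := domG _ _ Gij.
have ij : i != j by apply: contraTneq Gij => ->; rewrite irrG.
set X := A i :&: e in hi; set Y := A j :&: e in hj; set Z := [set v in e | _].
have XY : [disjoint X & Y].
  apply/pred0P => x /=; rewrite !inE.
  by apply: contraNF ij => /andP[/andP[/andP[/eqP<- _] _] /andP[/andP[/eqP<- _] _]].
have ZXY : [disjoint Z & X :|: Y].
  apply/pred0P => x /=; rewrite !inE.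
  by apply/negbTE/andP => -[/andP[_ gtn] /orP[]/andP[/andP[/eqP px _] _]]; lia.
have Ze : Z \subset e by apply/subsetP => v; rewrite inE => /andP[].
have := leq_card_setI_disjoint e ZXY.
rewrite (setIidPr Ze) (setIidPr _) ?subUset ?subsetIr //.
rewrite cardsU (disjoint_setI0 XY) cards0 subn0.
have := divn_eq k 2; have := ltn_pmod k (isT : 0 < 2); lia.
Qed.

Lemma H11_overlap_mintr_le (G1 : rel nat) (e f : {set T}) :
  irreflexive G1 -> (forall i j, G1 i j -> (1 <= i <= n) && (1 <= j <= n)) ->
  H11 part inA k n G1 e -> 2 <= #|e :&: f| -> mintr f <= n.
Proof.
move=> irrG domG He ef; rewrite leqNgt; apply/negP => ltna.
have := H11_card_part_gt irrG domG He.
suff /subset_leq_card : e :&: f \subset [set v in e | n < part v] by lia.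
apply/subsetP => v /setIP[ve vf]; rewrite inE ve /=.
exact: leq_trans ltna (mintr_le vf).
Qed.

Lemma H12_disjoint_tr (e f : {set T}) a :
  (forall i, n + 1 <= i <= 2 * n -> #|A i| = 2 * k - 2 * l - 3) ->
  l.+1 < k -> [disjoint e & f] ->
  H12 part inA k l n e -> H12 part inA k l n f -> tr part e a -> tr part f a -> False.
Proof.
move=> hA2 lk ef [_ [i [hi [tre [_ hei]]]]] [_ [j [hj [trf [_ hfj]]]]].
rewrite tre trf => ha hb; have eji : j = i.
  by move: ha hb => /orP[]/eqP-> /orP[]/eqP; lia.
have := leq_card_setI_disjoint (A (n + i)) ef.
by rewrite hei -eji hfj eji hA2; lia.
Qed.

End Edges.

Theorem claim3p3 (k l n : nat) (T : finType) (part : T -> nat) (inA : pred T)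
  (G1 : rel nat)
  (hl : 2 <= l) (hlk : 2 * l < k) (hn : 1 <= n)
  (hG1sym : symmetric G1) (hG1irr : irreflexive G1)
  (hG1dom : forall i j, G1 i j -> (1 <= i <= n) && (1 <= j <= n))
  (hpart : forall v, 1 <= part v <= 2 * n)
  (hA1 : forall i, 1 <= i <= n -> #|A part inA i| = 2 * (k %/ 2) + l)
  (hA2 : forall i, n + 1 <= i <= 2 * n -> #|A part inA i| = 2 * k - 2 * l - 3)
  (s : nat) (hs : 1 <= s) (vs : seq T)
  (huniq : uniq vs) (hsize : size vs = k + s.+1 * (k - l))
  (he : H1 part inA k l n G1 (path_edge k l vs 0))
  (he' : H1 part inA k l n G1 (path_edge k l vs s.+1))
  (hmid : forall j, 1 <= j <= s -> H2 part k l (path_edge k l vs j)) :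
  (forall j, 1 <= j <= s ->
     mintr part (path_edge k l vs j) = mintr part (path_edge k l vs 1)) /\
  tr1 part n (path_edge k l vs 0) (mintr part (path_edge k l vs 1)) /\
  tr1 part n (path_edge k l vs s.+1) (mintr part (path_edge k l vs 1)) /\
  ~ (H12 part inA k l n (path_edge k l vs 0) /\
     H12 part inA k l n (path_edge k l vs s.+1)).
Proof.
have lk : l < k by lia.
set edge := path_edge k l vs.
have overlap j : j <= s -> l <= #|edge j :&: edge j.+1|.
  move=> js; apply: path_edge_overlap => //; first lia.
  by rewrite hsize addnC leq_add ?leq_mul //; lia.
have disj : [disjoint edge 0 & edge s.+1].
  apply: path_edge0_disjoint => //.
  have : 2 * (k - l) <= s.+1 * (k - l) by rewrite leq_mul.
  lia.
have mid_eq j : 1 <= j <= s -> mintr part (edge j) = mintr part (edge 1).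
  by apply: (H2_chain_mintr lk hmid) => i /andP[_ /ltnW]; apply: overlap.
set a := mintr part (edge 1).
have ov10 : l <= #|edge 1 :&: edge 0| by rewrite setIC overlap.
have [v0 /setIP[_ v0e] pv0] := H2_overlap_mintr lk (hmid 1 hs) ov10.
have H2s : H2 part k l (edge s) by apply: hmid; rewrite hs leqnn.
have [w0 /setIP[_ w0e'] pw0] := H2_overlap_mintr lk H2s (overlap s (leqnn s)).
rewrite mid_eq in pw0; last lia.
have tr0 : tr part (edge 0) a by rewrite -[a]pv0 mem_tr.
have trs : tr part (edge s.+1) a by rewrite -[a]pw0 mem_tr.
have lkl : l.+1 < k by lia.
have le_an : a <= n.
  rewrite leqNgt; apply/negP => ltna.
  have e12 : H12 part inA k l n (edge 0).
    case: he => // He; have ov01 := leq_trans hl (overlap 0 isT).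
    by have := H11_overlap_mintr_le hG1irr hG1dom He ov01; rewrite -/a; lia.
  have e'12 : H12 part inA k l n (edge s.+1).
    case: he' => // He'.
    have ovs : 2 <= #|edge s.+1 :&: edge s| by rewrite setIC (leq_trans hl) ?overlap.
    by have := H11_overlap_mintr_le hG1irr hG1dom He' ovs; rewrite mid_eq -/a; lia.
  exact: H12_disjoint_tr hA2 lkl disj e12 e'12 tr0 trs.
have le1a : 1 <= a by rewrite -[a]pv0; case/andP: (hpart v0).
rewrite /tr1 le1a le_an tr0 trs; do 3!split => //.
by case=> e12 e'12; exact: H12_disjoint_tr hA2 lkl disj e12 e'12 tr0 trs.
Qed.
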